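(* Let $k\ge2$. Consider the system of linear equations in the $k^2$ unknowns $(x_{ij})_{i,j=1}^k$: $\sum_{j=1}^k x_{ij}=p_i$ ($i=1,\dots,k$); $\sum_{i=1}^k x_{ij}=q_j$ ($j=1,\dots,k$); $x_{ii}=\min(p_i,q_i)$ ($i=1,\dots,k$); $x_{ii}+x_{ij}+x_{ji}+x_{jj}=\min(p_i+p_j,q_i+q_j)$ ($1\le i<j\le k$). The coefficient matrix of this system of $3k+\binom{k}{2}$ equations has rank $2k-1+\binom{k}{2}$.
   Context: $p=(p_1,\dots,p_k)$ and $q=(q_1,\dots,q_k)$ are probability vectors (nonnegative entries summing to 1); only the coefficient matrix (a 0/1 matrix) matters for the rank. *)

From HB Require Import structures.
From mathcomp Require Import all_boot all_order all_algebra.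
Set Implicit Arguments. Unset Strict Implicit. Unset Printing Implicit Defensive.
Import GRing.Theory Num.Theory.
Local Open Scope ring_scope.

(* Unknowns x_{ij} (i,j : 'I_k) are the coordinates of a row vector of
   length k*k, via mxvec: (mxvec A) (mxvec_index i j) = A i j.
   Each equation is a row given by the k x k matrix of coefficients of the x_{ij}. *)

Definition rowsum_eq (R : nzRingType) (k : nat) (i : 'I_k) : 'rV[R]_(k * k) :=
  mxvec (\matrix_(a < k, b < k) ((a == i)%:R : R)).
Definition colsum_eq (R : nzRingType) (k : nat) (j : 'I_k) : 'rV[R]_(k * k) :=
  mxvec (\matrix_(a < k, b < k) ((b == j)%:R : R)).
Definition diag_eq (R : nzRingType) (k : nat) (i : 'I_k) : 'rV[R]_(k * k) :=
  mxvec (\matrix_(a < k, b < k) (((a == i) && (b == i))%:R : R)).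
(* x_{ii} + x_{ij} + x_{ji} + x_{jj} = min(p_i+p_j, q_i+q_j), for i < j (0-based) *)
Definition pair_eq (R : nzRingType) (k : nat) (ij : nat * nat) : 'rV[R]_(k * k) :=
  mxvec (\matrix_(a < k, b < k)
    (((((a : nat) == ij.1) || ((a : nat) == ij.2)) &&
      (((b : nat) == ij.1) || ((b : nat) == ij.2)))%:R : R)).

Definition pairs (k : nat) : seq (nat * nat) :=
  [seq (i, j) | i <- iota 0 k, j <- [seq j <- iota 0 k | (i < j)%N]].

Definition coef_mx (R : nzRingType) (k : nat)
  : 'M[R]_(k + (k + (k + size (pairs k))), k * k) :=
  col_mx (\matrix_(i < k) rowsum_eq R i)
    (col_mx (\matrix_(j < k) colsum_eq R j)
      (col_mx (\matrix_(i < k) diag_eq R i)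
        (\matrix_(r < size (pairs k)) pair_eq R k (nth (0%N, 0%N) (pairs k) r)))).

From Pilot Require Import Defs.
From HB Require Import structures.
From mathcomp Require Import all_boot all_order all_algebra.
From mathcomp Require Import zify ring.
Import GRing.Theory Num.Theory.

(* Over any field, the row space of the system is spanned by the k rows
   E_ii, the 'C(k, 2) symmetric rows E_ij + E_ji (i < j), and the row-sum
   rows of all but the last row: a pair row is E_ii + E_jj + (E_ij + E_ji),
   row sum j plus column sum j is 2 E_jj + sum_(i != j) (E_ij + E_ji), and
   the last row sum is the all-ones row (the sum of all E_ii and E_ij + E_ji)
   minus the other row sums.  These 2k - 1 + 'C(k, 2) rows are independent:
   reading a vanishing combination at the entries (k, c) and (c, k), then at
   (i, j) with i < j, and finally at (i, i), kills its coefficients in turn. *)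

Lemma mem_pairs k p : (p \in pairs k) = (p.1 < p.2 < k)%N.
Proof.
case: p => i j /=; apply/allpairsPdep/idP => [[x [y [_]]]|/andP[ij jk]].
  by rewrite mem_filter mem_iota => /andP[xy /andP[_ yk]] [-> ->]; rewrite xy.
by exists i, j; rewrite mem_iota mem_filter mem_iota ij jk (ltn_trans ij jk).
Qed.

Lemma uniq_pairs k : uniq (pairs k).
Proof.
apply: allpairs_uniq_dep => [|x _|[x y] [x' y'] _ _ /= [-> ->]] //.
  exact: iota_uniq.
exact/filter_uniq/iota_uniq.
Qed.

Lemma count_ltn_iota i k : count (fun j => i < j) (iota 0 k) = (k - i.+1)%N.
Proof.
elim: k => [|k IHk] //.
by rewrite -[k.+1]addn1 iotaD count_cat IHk /= add0n addn0; case: ltnP => /= ?; lia.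
Qed.

Lemma size_pairs k : size (pairs k) = 'C(k, 2).
Proof.
rewrite size_allpairs_dep sumnE big_map -bin2_sum big_nat_rev /index_iota subn0.
by apply: eq_bigr => i _; rewrite size_filter count_ltn_iota add0n.
Qed.

Local Open Scope ring_scope.

Lemma natr_andb (R : nzSemiRingType) (x y : bool) : ((x && y)%:R : R) = x%:R * y%:R.
Proof. by case: x; rewrite ?mul1r ?mul0r. Qed.

Lemma natr_orb (R : nzSemiRingType) (x y : bool) :
  ~~ (x && y) -> ((x || y)%:R : R) = x%:R + y%:R.
Proof. by case: x; case: y; rewrite ?addr0 ?add0r. Qed.

Lemma sum_mulr_delta (R : nzSemiRingType) (I : finType) (F : I -> R) (i0 : I) :
  \sum_i F i * (i0 == i)%:R = F i0.
Proof.
rewrite (bigD1 i0) //= eqxx mulr1 big1 ?addr0 // => i ne_i.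
by rewrite eq_sym (negbTE ne_i) mulr0.
Qed.

Lemma submx_col_mxl {F : fieldType} {m1 m2 N} (A : 'M[F]_(m1, N)) (B : 'M_(m2, N)) :
  (A <= col_mx A B)%MS.
Proof. by rewrite -addsmxE addsmxSl. Qed.

Lemma submx_col_mxr {F : fieldType} {m1 m2 N} (A : 'M[F]_(m1, N)) (B : 'M_(m2, N)) :
  (B <= col_mx A B)%MS.
Proof. by rewrite -addsmxE addsmxSr. Qed.

Lemma mxvec_rowP (T : Type) m n (u v : 'rV[T]_(m * n)) :
  (forall i j, u 0 (mxvec_index i j) = v 0 (mxvec_index i j)) -> u = v.
Proof. by move=> uv; apply/rowP => ij; case/mxvec_indexP: ij. Qed.

Section CoefficientRowSpace.

Variables (R : fieldType) (n : nat).
Local Notation k := n.+1.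
Local Notation P := (size (pairs k)).
Local Notation pair_at r := (nth (0%N, 0%N) (pairs k) r).
Local Notation widen c := (widen_ord (leqnSn n) c).

Lemma pair_atP (r : 'I_P) : ((pair_at r).1 < (pair_at r).2 < k)%N.
Proof. by rewrite -mem_pairs mem_nth. Qed.

Lemma pair_at_inj : injective (fun r : 'I_P => pair_at r).
Proof.
move=> r r' e; apply: val_inj; apply/eqP.
by rewrite -(nth_uniq (0%N, 0%N) _ _ (uniq_pairs k)) ?ltn_ord // e.
Qed.

Lemma pair_at_surj {a b : 'I_k} :
  (a < b)%N -> exists r : 'I_P, pair_at r = (a : nat, b : nat).
Proof.
move=> ab; have ab_in : (a : nat, b : nat) \in pairs k by rewrite mem_pairs /= ab ltn_ord.
by exists (Ordinal (etrans (index_mem _ _) ab_in)); rewrite nth_index.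
Qed.

Definition sym_mx (p : nat * nat) : 'M[R]_k :=
  \matrix_(a, b) ((((a : nat), (b : nat)) == p) || (((b : nat), (a : nat)) == p))%:R.

Definition sym_eq (p : nat * nat) : 'rV[R]_(k * k) := mxvec (sym_mx p).

Lemma sym_mxC p a b : sym_mx p a b = sym_mx p b a.
Proof. by rewrite !mxE orbC. Qed.

Lemma sym_mx_pair_at {r0 : 'I_P} {a b : 'I_k} (r : 'I_P) :
  pair_at r0 = (a : nat, b : nat) -> sym_mx (pair_at r) a b = (r0 == r)%:R.
Proof.
move=> r0_ab; have /andP[ab _] := pair_atP r0; rewrite r0_ab /= in ab.
rewrite mxE; have -> : ((b : nat, a : nat) == pair_at r) = false.
  apply: contraTF ab => /eqP ba; have /andP[+ _] := pair_atP r.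
  by rewrite -ba /= => lt_ba; rewrite ltnNge ltnW.
by rewrite orbF -r0_ab (inj_eq pair_at_inj).
Qed.

Lemma sym_mx_pair_at_diag (r : 'I_P) (a : 'I_k) : sym_mx (pair_at r) a a = 0.
Proof.
rewrite mxE orbb; case: eqP => // aa; have := pair_atP r.
by rewrite -aa ltnn.
Qed.

Lemma sum_sym_mx_pair_at {r0 : 'I_P} {a b : 'I_k} (F : 'I_P -> R) :
  pair_at r0 = (a : nat, b : nat) -> \sum_r F r * sym_mx (pair_at r) a b = F r0.
Proof.
move=> r0_ab; under eq_bigr => r _ do rewrite (sym_mx_pair_at r r0_ab).
exact: sum_mulr_delta.
Qed.

Lemma sum_sym_mx_neq {a b : 'I_k} : a != b ->
  exists r0 : 'I_P, pair_at r0 = (minn a b, maxn a b)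
    /\ forall F : 'I_P -> R, \sum_r F r * sym_mx (pair_at r) a b = F r0.
Proof.
move=> ne_ab; case: ltngtP => [ab|ba|/val_inj eq_ab].
- have [r0 r0_ab] := pair_at_surj ab.
  by exists r0; split=> // F; rewrite (sum_sym_mx_pair_at _ r0_ab).
- have [r0 r0_ba] := pair_at_surj ba; exists r0; split=> // F.
  under eq_bigr do rewrite sym_mxC.
  exact: sum_sym_mx_pair_at.
- by rewrite eq_ab eqxx in ne_ab.
Qed.

Definition coef_basis : 'M[R]_(k + (P + n), k * k) :=
  col_mx (\matrix_(i < k) diag_eq R i)
    (col_mx (\matrix_(r < P) sym_eq (pair_at r)) (\matrix_(c < n) rowsum_eq R (widen c))).

Lemma coef_basis_comb_entry (x1 : 'rV[R]_k) (x2 : 'rV[R]_P) (x3 : 'rV[R]_n) (a b : 'I_k) :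
  (row_mx x1 (row_mx x2 x3) *m coef_basis) 0 (mxvec_index a b) =
  x1 0 b * (a == b)%:R + \sum_r x2 0 r * sym_mx (pair_at r) a b
    + \sum_c x3 0 c * (a == widen c)%:R.
Proof.
rewrite !mul_row_col !mxE addrA; congr (_ + _ + _).
- under eq_bigr => i _ do rewrite !mxE mxvecE mxE natr_andb mulrA.
  exact: sum_mulr_delta.
- by apply: eq_bigr => r _; rewrite mxE mxvecE.
- by apply: eq_bigr => c _; rewrite !mxE mxvecE mxE.
Qed.

Lemma widen_eq_max (c : 'I_n) : (widen c == ord_max) = false.
Proof. by rewrite -val_eqE /= ltn_eqF. Qed.

Lemma sum_mulr_widen_max (F : 'I_n -> R) : \sum_c F c * (ord_max == widen c)%:R = 0.
Proof. by apply: big1 => c _; rewrite eq_sym widen_eq_max mulr0. Qed.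

Lemma sum_mulr_widen (F : 'I_n -> R) c0 : \sum_c F c * (widen c0 == widen c)%:R = F c0.
Proof. exact: sum_mulr_delta. Qed.

Lemma row_free_coef_basis : row_free coef_basis.
Proof.
apply: inj_row_free => x; rewrite -[x]hsubmxK -[rsubmx x]hsubmxK.
move: (lsubmx x) (lsubmx (rsubmx x)) (rsubmx (rsubmx x)) => x1 x2 x3 x0.
have E (a b : 'I_k) : x1 0 b * (a == b)%:R + \sum_r x2 0 r * sym_mx (pair_at r) a b
    + \sum_c x3 0 c * (a == widen c)%:R = 0.
  by rewrite -coef_basis_comb_entry x0 mxE.
have x3_0 : x3 = 0.
  apply/rowP => c; have [r0 r0_c] := @pair_at_surj (widen c) ord_max (ltn_ord c).
  have := E ord_max (widen c).
  rewrite eq_sym widen_eq_max mulr0 add0r sum_mulr_widen_max addr0.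
  under eq_bigr => r _ do rewrite sym_mxC.
  rewrite (sum_sym_mx_pair_at _ r0_c) => x2_0.
  have := E (widen c) ord_max; rewrite widen_eq_max mulr0 add0r.
  by rewrite (sum_sym_mx_pair_at _ r0_c) x2_0 add0r sum_mulr_widen mxE.
have x2_0 : x2 = 0.
  apply/rowP => r; have /andP[lt12 lt2k] := pair_atP r.
  have lt1k := ltn_trans lt12 lt2k.
  have r_ab : pair_at r = ((@inord n (pair_at r).1 : nat), (@inord n (pair_at r).2 : nat)).
    by rewrite !inordK // -surjective_pairing.
  have := E (inord (pair_at r).1) (inord (pair_at r).2).
  rewrite (sum_sym_mx_pair_at _ r_ab) -val_eqE /= !inordK // ltn_eqF // mulr0 add0r.
  by rewrite big1 ?addr0 ?mxE // => c _; rewrite x3_0 mxE mul0r.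
have x1_0 : x1 = 0.
  apply/rowP => i; have := E i i; rewrite eqxx mulr1 big1 => [|r _]; last first.
    by rewrite sym_mx_pair_at_diag mulr0.
  by rewrite big1 ?addr0 ?mxE // => c _; rewrite x3_0 mxE mul0r.
by rewrite x1_0 x2_0 x3_0 !row_mx0.
Qed.


Lemma sum_rowsum_eq :
  \sum_i rowsum_eq R i = row_mx (const_mx 1) (row_mx (const_mx 1) 0) *m coef_basis.
Proof.
apply: mxvec_rowP => a b; rewrite coef_basis_comb_entry summxE.
under eq_bigr do rewrite /rowsum_eq mxvecE mxE.
rewrite [X in _ = _ + X]big1 ?addr0 => [|c _]; last by rewrite mxE mul0r.
have -> : \sum_i (a == i)%:R = 1 :> R.
  by rewrite (bigD1 a) //= eqxx big1 ?addr0 // => i; rewrite eq_sym => /negbTE->.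
have [<-|ne_ab] := eqVneq a b.
  by rewrite mxE mulr1 big1 ?addr0 // => r _; rewrite sym_mx_pair_at_diag mulr0.
have [r0 [_ ->]] := sum_sym_mx_neq ne_ab.
by rewrite mulr0 add0r mxE.
Qed.

Lemma colsum_add_rowsum_eq (j : 'I_k) :
  colsum_eq R j + rowsum_eq R j =
  row_mx (\row_i ((i == j)%:R *+ 2))
    (row_mx (\row_r (((pair_at r).1 == j) || ((pair_at r).2 == j))%:R) 0) *m coef_basis.
Proof.
apply: mxvec_rowP => a b.
rewrite coef_basis_comb_entry mxE /colsum_eq /rowsum_eq !mxvecE !mxE.
rewrite [X in _ = _ + X]big1 ?addr0 => [|c _]; last by rewrite mxE mul0r.
have [<-|ne_ab] := eqVneq a b.
  rewrite mulr1 big1 ?addr0 => [|r _]; last by rewrite sym_mx_pair_at_diag mulr0.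
  by rewrite mulr2n.
have [r0 [r0_ab ->]] := sum_sym_mx_neq ne_ab.
rewrite mulr0 add0r mxE r0_ab /=.
have -> : (minn a b == j) || (maxn a b == j) = (a == j :> nat) || (b == j :> nat).
  by rewrite /minn /maxn; case: ltnP => // _; rewrite orbC.
rewrite natr_orb; first exact: addrC.
by apply: contraNN ne_ab => /andP[/eqP a_j /eqP b_j]; rewrite -val_eqE /= a_j b_j.
Qed.

Lemma pair_eq_split (p : nat * nat) : (p.1 < p.2 < k)%N ->
  Defs.pair_eq R k p = diag_eq R (inord p.1) + diag_eq R (inord p.2) + sym_eq p.
Proof.
case: p => p1 p2 /= /andP[lt12 lt2k]; have lt1k := ltn_trans lt12 lt2k.
have ne12 x : ~~ ((x == p1) && (x == p2)).
  by apply/andP => -[/eqP-> /eqP eq12]; rewrite eq12 ltnn in lt12.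
rewrite -!linearD; congr mxvec; apply/matrixP => a b.
rewrite !mxE -!val_eqE /= !inordK // !xpair_eqE natr_andb !natr_orb ?ne12 //.
  by rewrite !natr_andb; ring.
by apply: contraNN (ne12 a) => /and3P[/andP[-> _] _ ->].
Qed.

Lemma diag_eq_sub_coef_basis (i : 'I_k) : (diag_eq R i <= coef_basis)%MS.
Proof.
rewrite /coef_basis; apply: submx_trans _ (submx_col_mxl _ _).
by apply: (eq_row_sub i); rewrite rowK.
Qed.

Lemma sym_eq_sub_coef_basis (r : 'I_P) : (sym_eq (pair_at r) <= coef_basis)%MS.
Proof.
rewrite /coef_basis; apply: submx_trans _ (submx_col_mxr _ _).
apply: submx_trans _ (submx_col_mxl _ _).
by apply: (eq_row_sub r); rewrite rowK.
Qed.

Lemma rowsum_widen_sub_coef_basis (c : 'I_n) : (rowsum_eq R (widen c) <= coef_basis)%MS.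
Proof.
rewrite /coef_basis; apply: submx_trans _ (submx_col_mxr _ _).
apply: submx_trans _ (submx_col_mxr _ _).
by apply: (eq_row_sub c); rewrite rowK.
Qed.

Lemma rowsum_eq_sub_coef_basis (i : 'I_k) : (rowsum_eq R i <= coef_basis)%MS.
Proof.
case: (ltnP i n) => [lt_in|le_ni].
  by rewrite (_ : i = widen (Ordinal lt_in)) ?rowsum_widen_sub_coef_basis //; apply: val_inj.
have -> : i = ord_max by apply/val_inj/eqP; rewrite eqn_leq le_ni -ltnS ltn_ord.
have -> : rowsum_eq R ord_max = \sum_i rowsum_eq R i - \sum_c rowsum_eq R (widen c).
  by rewrite big_ord_recr /= addrC addrK.
apply: addmx_sub; first by rewrite sum_rowsum_eq submxMl.
by rewrite eqmx_opp; apply: summx_sub => c _; apply: rowsum_widen_sub_coef_basis.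
Qed.

Lemma colsum_eq_sub_coef_basis (j : 'I_k) : (colsum_eq R j <= coef_basis)%MS.
Proof.
rewrite -(addrK (rowsum_eq R j) (colsum_eq R j)) colsum_add_rowsum_eq.
by rewrite addmx_sub ?eqmx_opp ?submxMl ?rowsum_eq_sub_coef_basis.
Qed.

Lemma coef_mx_sub_coef_basis : (coef_mx R k <= coef_basis)%MS.
Proof.
rewrite !col_mx_sub; apply/and4P; split; apply/row_subP => i; rewrite rowK.
- exact: rowsum_eq_sub_coef_basis.
- exact: colsum_eq_sub_coef_basis.
- exact: diag_eq_sub_coef_basis.
have /pair_eq_split-> := pair_atP i.
by rewrite !addmx_sub ?diag_eq_sub_coef_basis ?sym_eq_sub_coef_basis.
Qed.

Lemma coef_basis_sub_coef_mx : (coef_basis <= coef_mx R k)%MS.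
Proof.
have rowsum_sub (i : 'I_k) : (rowsum_eq R i <= coef_mx R k)%MS.
  by apply: submx_trans _ (submx_col_mxl _ _); apply: (eq_row_sub i); rewrite rowK.
have diag_sub (i : 'I_k) : (diag_eq R i <= coef_mx R k)%MS.
  apply: submx_trans _ (submx_col_mxr _ _); apply: submx_trans _ (submx_col_mxr _ _).
  by apply: submx_trans _ (submx_col_mxl _ _); apply: (eq_row_sub i); rewrite rowK.
have pair_sub (r : 'I_P) : (Defs.pair_eq R k (pair_at r) <= coef_mx R k)%MS.
  apply: submx_trans _ (submx_col_mxr _ _); apply: submx_trans _ (submx_col_mxr _ _).
  by apply: submx_trans _ (submx_col_mxr _ _); apply: (eq_row_sub r); rewrite rowK.
rewrite /coef_basis !col_mx_sub; apply/and3P; split; apply/row_subP => i; rewrite rowK //.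
rewrite -(canLR (addKr _) (pair_eq_split _ (pair_atP i))).
by rewrite addmx_sub ?eqmx_opp ?addmx_sub ?pair_sub ?diag_sub.
Qed.

Lemma rank_coef_mx : \rank (coef_mx R k) = (k + (P + n))%N.
Proof.
rewrite (eqmx_rank (_ : coef_mx R k == coef_basis)%MS); last first.
  by apply/andP; split; [exact: coef_mx_sub_coef_basis | exact: coef_basis_sub_coef_mx].
exact/eqP/row_free_coef_basis.
Qed.

End CoefficientRowSpace.

Theorem theoremS1 (R : numFieldType) (k : nat) (hk : (2 <= k)%N) :
  size (pairs k) = 'C(k, 2) /\
  \rank (coef_mx R k) = (2 * k - 1 + 'C(k, 2))%N.
Proof.
split; first exact: size_pairs.
case: k hk => [//|n] _; rewrite rank_coef_mx size_pairs; lia.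
Qed.
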